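(* Let $\mathcal C$ be an EACP over a field $K$ with a natural basis $\{h_1,\dots,h_n,r\}$ whose multiplication table is $$h_1r=\sum_{j=1}^n a_{1j}h_j+\delta r,\ \ \delta\in\{0,1\},\qquad h_ir=\sum_{j=1}^n a_{ij}h_j\ \ (2\le i\le n),$$ (together with $h_ih_j=0$, $rr=0$, and commutativity). Then for the plenary periods $q_i$ of the $h_i$: (a) if $\delta=0$ then $q_i\in\{1,\infty\}$ for all $i$; (b) if $\delta=1$ then $q_1\in\{1,2,\infty\}$ and $q_i\in\{1,\infty\}$ for $i\neq 1$.
   Context: An EACP is a commutative algebra with a basis $\{h_1,\dots,h_n,r\}$ such that $h_ir=rh_i=\sum_j a_{ij}h_j+b_ir$, $h_ih_j=0$, $rr=0$. For $x=\sum_i\alpha_ih_i+ar$, $h_i\prec x$ means $\alpha_i\ne0$. Plenary powers: $y^{[1]}=yy$, $y^{[m]}=y^{[m-1]}y^{[m-1]}$. The plenary period of $h_j$ is $q_j=\min\{m\in\mathbb N: h_j\prec (h_jr)^{[m]}\}$, and $q_j=\infty$ if this set is empty. *)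

From mathcomp Require Import all_boot all_order all_algebra.
Set Implicit Arguments. Unset Strict Implicit. Unset Printing Implicit Defensive.
Import GRing.Theory.
Local Open Scope ring_scope.

(* An EACP over a field K with natural basis {h_0,...,h_n, r}
   (h indexed by 'I_n.+1; h_0 plays the role of the paper's h_1).
   An element sum_i alpha_i h_i + a r is represented by the pair (alpha, a).
   Multiplication table: h_i r = r h_i = sum_j A i j h_j + b i r,
   h_i h_j = 0, r r = 0, extended bilinearly. *)
Definition eacp_elt (K : fieldType) (n : nat) := (('I_n.+1 -> K) * K)%type.

Definition eacp_mul (K : fieldType) (n : nat) (A : 'M[K]_(n.+1))
    (b : 'I_n.+1 -> K) (x y : eacp_elt K n) : eacp_elt K n :=
  let c := fun i => x.1 i * y.2 + x.2 * y.1 i in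
  (fun j => \sum_(i < n.+1) c i * A i j, \sum_(i < n.+1) c i * b i).

Definition eacp_h (K : fieldType) (n : nat) (i : 'I_n.+1) : eacp_elt K n :=
  (fun j => if j == i then 1 else 0, 0).
Definition eacp_r (K : fieldType) (n : nat) : eacp_elt K n := (fun _ => 0, 1).

Definition eacp_prec (K : fieldType) (n : nat) (i : 'I_n.+1) (x : eacp_elt K n) : Prop :=
  x.1 i != 0.

(* plenary powers: y^[1] = y y, y^[m] = y^[m-1] y^[m-1]  (iter m squaring) *)
Definition plenary_power (K : fieldType) (n : nat) (A : 'M[K]_(n.+1))
    (b : 'I_n.+1 -> K) (y : eacp_elt K n) (m : nat) : eacp_elt K n :=
  iter m (fun z => eacp_mul A b z z) y.

Definition plen_cond (K : fieldType) (n : nat) (A : 'M[K]_(n.+1))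
    (b : 'I_n.+1 -> K) (j : 'I_n.+1) (m : nat) : Prop :=
  (0 < m)%N /\ eacp_prec j (plenary_power A b (eacp_mul A b (eacp_h K j) (eacp_r K n)) m).

(* q = Some m : the plenary period of h_j is m; q = None : it is infinity *)
Definition plenary_period (K : fieldType) (n : nat) (A : 'M[K]_(n.+1))
    (b : 'I_n.+1 -> K) (j : 'I_n.+1) (q : option nat) : Prop :=
  match q with
  | Some m => plen_cond A b j m /\ (forall k, plen_cond A b j k -> (m <= k)%N)
  | None => forall k, ~ plen_cond A b j k
  end.

Definition cor_b (K : fieldType) (n : nat) (delta : K) : 'I_n.+1 -> K :=
  fun i => if i == ord0 then delta else 0.

From mathcomp Require Import all_boot all_order all_algebra.
Set Implicit Arguments. Unset Strict Implicit. Unset Printing Implicit Defensive.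
Import GRing.Theory.
Local Open Scope ring_scope.

(* The product of two elements only sees their r-coordinates paired with the
   other factor's h-coordinates, so an element with zero r-coordinate squares
   to 0. Since h_j r has r-coordinate b_j, this kills every plenary power of
   h_j r when b_j = 0. For j = 1 the r-coordinate of a square z z is
   2 z_1 z_r delta, so if h_1 does not occur in (h_1 r)^[1] then (h_1 r)^[2]
   has zero r-coordinate and all later powers vanish: the period is at most 2. *)

Section PlenaryPowers.

Variables (K : fieldType) (n : nat) (A : 'M[K]_(n.+1)) (b : 'I_n.+1 -> K).

Local Notation sqr z := (eacp_mul A b z z).
Local Notation pp := (plenary_power A b).

Lemma eacp_sqr_r0 (z : eacp_elt K n) :
  z.2 = 0 -> (forall j, (sqr z).1 j = 0) /\ (sqr z).2 = 0.
Proof.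
move=> z2; rewrite /eacp_mul /= z2.
by split=> [j|]; apply: big1 => i _; rewrite mulr0 mul0r addr0 mul0r.
Qed.

Lemma plenary_powerS (y : eacp_elt K n) m : pp y m.+1 = sqr (pp y m).
Proof. by []. Qed.

Lemma plenary_power_r0 (y : eacp_elt K n) m k :
  (pp y m).2 = 0 -> (m <= k)%N -> (pp y k).2 = 0.
Proof.
move=> ym; elim: k => [|k IHk]; first by rewrite leqn0 => /eqP <-.
rewrite leq_eqVlt => /orP[/eqP <- // | ltmk].
by rewrite plenary_powerS; case: (eacp_sqr_r0 (IHk ltmk)).
Qed.

Lemma plenary_power_h0 (y : eacp_elt K n) m k j :
  (pp y m).2 = 0 -> (m < k)%N -> (pp y k).1 j = 0.
Proof.
case: k => // k ym lemk.
by rewrite plenary_powerS; case: (eacp_sqr_r0 (plenary_power_r0 ym lemk)).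
Qed.

Lemma eacp_hr_r (j : 'I_n.+1) : (eacp_mul A b (eacp_h K j) (eacp_r K n)).2 = b j.
Proof.
rewrite /eacp_mul /= (bigD1 j) //= eqxx big1 => [|i /negbTE ->];
  by rewrite ?mulr1 ?mulr0 ?addr0 ?mul1r ?mul0r.
Qed.

Lemma plen_cond_bound (j : 'I_n.+1) m k :
  (pp (eacp_mul A b (eacp_h K j) (eacp_r K n)) m).2 = 0 ->
  plen_cond A b j k -> (k <= m)%N.
Proof.
move=> ym [_ hjk]; rewrite leqNgt; apply/negP => ltmk.
by move: hjk; rewrite /eacp_prec (plenary_power_h0 _ ym ltmk) eqxx.
Qed.

Lemma plenary_period_None (j : 'I_n.+1) q :
  b j = 0 -> plenary_period A b j q -> q = None.
Proof.
move=> bj0; case: q => // m [[m_gt0 hjm] _].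
have hr_r0 : (pp (eacp_mul A b (eacp_h K j) (eacp_r K n)) 0).2 = 0.
  by rewrite eacp_hr_r.
by have := plen_cond_bound hr_r0 (conj m_gt0 hjm); rewrite leqn0 (gtn_eqF m_gt0).
Qed.

End PlenaryPowers.

Lemma cor_b_sqr_r0 (K : fieldType) (n : nat) (A : 'M[K]_(n.+1)) (delta : K)
    (z : eacp_elt K n) :
  z.1 ord0 = 0 -> (eacp_mul A (cor_b delta) z z).2 = 0.
Proof.
move=> z10; rewrite /eacp_mul /=; apply: big1 => i _; rewrite /cor_b.
by case: eqP => [->|_]; rewrite ?z10 ?mulr0 ?mul0r ?addr0 ?mul0r.
Qed.

Lemma plenary_period_ord0 (K : fieldType) (n : nat) (A : 'M[K]_(n.+1))
    (delta : K) (q : option nat) :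
  plenary_period A (cor_b delta) ord0 q ->
  q = Some 1%N \/ q = Some 2%N \/ q = None.
Proof.
case: q => [m [hm m_min]|]; last by right; right.
case: m hm m_min => [[]//|[|[|m]] hm m_min]; [by left|by right; left|exfalso].
set y := eacp_mul A (cor_b delta) (eacp_h K ord0) (eacp_r K n).
have y1_0 : (plenary_power A (cor_b delta) y 1).1 ord0 = 0.
  have [//|y1_ne0] := eqVneq ((plenary_power A (cor_b delta) y 1).1 ord0) 0.
  by have := m_min 1%N (conj erefl y1_ne0).
have y2_r0 : (plenary_power A (cor_b delta) y 2).2 = 0.
  by rewrite plenary_powerS cor_b_sqr_r0.
by have := plen_cond_bound y2_r0 hm.
Qed.

Theorem corollary3p4 (K : fieldType) (n : nat) (A : 'M[K]_(n.+1)) (delta : K) :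
  (delta = 0 \/ delta = 1) ->
  (delta = 0 -> forall (i : 'I_n.+1) (q : option nat),
      plenary_period A (@cor_b K n delta) i q -> q = Some 1%N \/ q = None) /\
  (delta = 1 ->
      (forall q : option nat, plenary_period A (@cor_b K n delta) ord0 q ->
          q = Some 1%N \/ q = Some 2%N \/ q = None) /\
      (forall (i : 'I_n.+1) (q : option nat), i != ord0 ->
          plenary_period A (@cor_b K n delta) i q -> q = Some 1%N \/ q = None)).
Proof.
move=> _; split=> [delta0 i q | _]; last split=> [|i q i_ne0].
- by move=> hq; right; apply: plenary_period_None hq; rewrite /cor_b delta0 if_same.
- exact: plenary_period_ord0.
- by move=> hq; right; apply: plenary_period_None hq; rewrite /cor_b (negbTE i_ne0).
Qed.
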